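(* For $\alpha\in[1,3)\cup(7,9]$ let $$\rho^{(4)}_\alpha=\tfrac1{16}\big(3P^+_4+\alpha\,\Pi_1+3\,\Pi_2+(10-\alpha)\Pi_3\big)$$ on $\mathbb{C}^4\otimes\mathbb{C}^4$. Then for every such $\alpha$ there exist $a,b,c,d\ge0$ satisfying either (Class I) $a+c=2$, $b+d=1$, $bd=(1-a)^2$, or (Class II) $a+c=1$, $b+d=2$, $ac=(1-b)^2$, such that $\mathrm{Tr}\big(\rho^{(4)}_\alpha W[a,b,c,d]\big)<0$.
   Context: $\{|i\rangle\}_{i=1}^4$ is the standard basis of $\mathbb{C}^4$, $|ij\rangle=|i\rangle\otimes|j\rangle$, indices modulo 4. $P^+_4=\frac14\sum_{i,j=1}^4|ii\rangle\langle jj|$, $\Pi_k=\frac14\sum_{l=1}^4|l,l+k\rangle\langle l,l+k|$, and $W[a,b,c,d]=\sum_{i=1}^4\big[a|ii\rangle\langle ii|+b|i,i+1\rangle\langle i,i+1|+c|i,i+2\rangle\langle i,i+2|+d|i,i+3\rangle\langle i,i+3|\big]-\sum_{i\neq j}|ii\rangle\langle jj|$. *)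

From HB Require Import structures.
From mathcomp Require Import all_boot all_order all_algebra.
Set Implicit Arguments. Unset Strict Implicit. Unset Printing Implicit Defensive.
Import Order.TTheory GRing.Theory Num.Theory.
Local Open Scope ring_scope.

Section Defs.
Variable R : rcfType.

(* basis vector |i j> of C^4 (x) C^4, identified with the standard basis
   of the 16-dimensional space via the row-major pairing mxvec_index *)
Definition ket2 (i j : 'I_4) : 'cV[R]_(4 * 4) := delta_mx (mxvec_index i j) 0.

Definition outer (u v : 'cV[R]_(4 * 4)) : 'M[R]_(4 * 4) := u *m v^T.

Definition addm4 (i : 'I_4) (k : nat) : 'I_4 := inord ((i + k) %% 4).

Definition Pplus4 : 'M[R]_(4 * 4) :=
  (1 / 4%:R) *: \sum_(i < 4) \sum_(j < 4) outer (ket2 i i) (ket2 j j).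

Definition Pik (k : nat) : 'M[R]_(4 * 4) :=
  (1 / 4%:R) *: \sum_(l < 4) outer (ket2 l (addm4 l k)) (ket2 l (addm4 l k)).

Definition Wmx (a b c d : R) : 'M[R]_(4 * 4) :=
  \sum_(i < 4) (a *: outer (ket2 i i) (ket2 i i)
              + b *: outer (ket2 i (addm4 i 1)) (ket2 i (addm4 i 1))
              + c *: outer (ket2 i (addm4 i 2)) (ket2 i (addm4 i 2))
              + d *: outer (ket2 i (addm4 i 3)) (ket2 i (addm4 i 3)))
  - \sum_(i < 4) \sum_(j < 4 | i != j) outer (ket2 i i) (ket2 j j).

Definition rho4 (alpha : R) : 'M[R]_(4 * 4) :=
  (1 / 16%:R) *: (3%:R *: Pplus4 + alpha *: Pik 1 + 3%:R *: Pik 2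
                  + (10%:R - alpha) *: Pik 3).

End Defs.

From HB Require Import structures.
From mathcomp Require Import all_boot all_order all_algebra ring lra.
Import Order.TTheory GRing.Theory Num.Theory.
Local Open Scope ring_scope.

(* Since Tr(A |x><y|) = <y|A|x>, the pairing Tr(rho W[a,b,c,d])
   only involves the matrix entries of rho^(4)_alpha at the positions where
   W[a,b,c,d] is supported:
   - the diagonal entries <i,i+k|rho|i,i+k>, equal to w_k / 64 where
     (w_0, w_1, w_2, w_3) = (3, alpha, 3, 10 - alpha) are the weights of
     P^+_4, Pi_1, Pi_2, Pi_3 in 16 rho (only P^+_4 resp. Pi_k contribute);
   - the entries <jj|rho|ii> with i <> j, equal to 3/64 (only P^+_4 contributes).
   Summing over the four values of i and the twelve pairs i <> j gives
     16 Tr(rho W[a,b,c,d]) = 3a + alpha b + 3c + (10 - alpha) d - 9.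
   The file first computes the entries of P^+_4, Pi_k and rho^(4)_alpha in the
   product basis, then derives this trace formula.  The theorem follows with
   Class I witnesses a = c = 1: (b, d) = (1, 0) gives 16 Tr = alpha - 3 < 0 for
   alpha < 3, and (b, d) = (0, 1) gives 16 Tr = 7 - alpha < 0 for alpha > 7. *)

Lemma mxtrace_mul_delta (R : pzSemiRingType) n (A : 'M[R]_n) (x y : 'I_n) :
  \tr (A *m delta_mx x y) = A y x.
Proof.
rewrite /mxtrace (bigD1 y) //= big1 => [|k /negbTE nky]; last first.
  by rewrite mxE big1 // => j _; rewrite mxE nky andbF mulr0.
rewrite addr0 mxE (bigD1 x) //= big1 => [|k /negbTE nkx].
  by rewrite mxE !eqxx mulr1 addr0.
by rewrite mxE nkx mulr0.
Qed.

Lemma mxtrace_mul_sumr (R : pzSemiRingType) n (I : Type) (r : seq I) (P : pred I)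
    (A : 'M[R]_n) (F : I -> 'M[R]_n) :
  \tr (A *m \sum_(i <- r | P i) F i) = \sum_(i <- r | P i) \tr (A *m F i).
Proof. by rewrite mulmx_sumr raddf_sum. Qed.

Lemma sum_indicator {R : pzSemiRingType} {T : finType} (x : T) (P : pred T) :
  \sum_(z : T) ((x == z) && P z)%:R = (P x)%:R :> R.
Proof.
rewrite (bigD1 x) //= eqxx big1 ?addr0 // => z /negbTE nzx.
by rewrite eq_sym nzx.
Qed.

Lemma mxvec_index_eq m n (i k : 'I_m) (j l : 'I_n) :
  (mxvec_index i j == mxvec_index k l) = (i == k) && (j == l).
Proof. by rewrite (inj_eq (@cast_ord_inj _ _ _)) (inj_eq (@enum_rank_inj _)). Qed.

Lemma addm4_0 (i : 'I_4) : addm4 i 0 = i.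
Proof. by apply: val_inj; rewrite /= inordK ?addn0 ?modn_small. Qed.

Lemma addm4_shift_eq (i : 'I_4) (k m : nat) : (k < 4)%N -> (m < 4)%N ->
  (addm4 i k == addm4 i m) = (k == m).
Proof.
move=> lt_k4 lt_m4; rewrite -val_eqE /= !inordK ?ltn_pmod //.
by rewrite eqn_modDl !modn_small.
Qed.

Lemma addm4_fixed (i : 'I_4) (k : nat) : (k < 4)%N -> (addm4 i k == i) = (k == 0%N).
Proof. by move=> lt_k4; rewrite -{2}(addm4_0 i) addm4_shift_eq. Qed.

Section Entries.
Variable R : rcfType.
Local Notation idx := (@mxvec_index 4 4).

Lemma outer_ket2 (i j k l : 'I_4) :
  outer (ket2 R i j) (ket2 R k l) = delta_mx (idx i j) (idx k l).
Proof. by rewrite /outer /ket2 trmx_delta mul_delta_mx. Qed.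

Lemma trace_mul_outer (A : 'M[R]_(4 * 4)) (i j k l : 'I_4) :
  \tr (A *m outer (ket2 R i j) (ket2 R k l)) = A (idx k l) (idx i j).
Proof. by rewrite outer_ket2 mxtrace_mul_delta. Qed.

Lemma Pplus4_entry (k l i j : 'I_4) :
  Pplus4 R (idx k l) (idx i j) = ((k == l) && (i == j))%:R / 4%:R.
Proof.
rewrite /Pplus4 mxE summxE mulrC div1r; congr (_ * _).
transitivity (\sum_(m < 4) \sum_(n < 4)
    (((k == m) && (l == m))%:R * ((i == n) && (j == n))%:R : R)).
  apply: eq_bigr => m _; rewrite summxE; apply: eq_bigr => n _.
  by rewrite outer_ket2 mxE !mxvec_index_eq -natrM mulnb.
under eq_bigr do rewrite -big_distrr /=.
rewrite -big_distrl /= (sum_indicator k (eq_op l)) (sum_indicator i (eq_op j)).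
by rewrite -natrM mulnb (eq_sym l) (eq_sym j).
Qed.

Lemma Pik_entry (m : nat) (k l i j : 'I_4) :
  Pik R m (idx k l) (idx i j) =
  [&& i == k, l == addm4 k m & j == addm4 k m]%:R / 4%:R.
Proof.
rewrite /Pik mxE summxE mulrC div1r; congr (_ * _).
rewrite (eq_bigr (fun n => ((k == n) &&
           [&& l == addm4 n m, i == n & j == addm4 n m])%:R)) => [|n _].
  by rewrite (sum_indicator k (fun n => [&& l == addm4 n m, i == n & j == addm4 n m]))
    /= andbCA.
rewrite outer_ket2 mxE !mxvec_index_eq.
by case: (k == n); case: (i == n).
Qed.

Lemma rho4_entry (alpha : R) (x y : 'I_(4 * 4)) :
  rho4 alpha x y = (3%:R * Pplus4 R x y + alpha * Pik R 1 x y + 3%:R * Pik R 2 x y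
                    + (10%:R - alpha) * Pik R 3 x y) / 16%:R.
Proof. by rewrite /rho4 [Pplus4 R]lock [Pik R]lock !mxE -!lock mulrC div1r. Qed.

(* The weight w_k of the k-th shifted diagonal in 16 rho^(4)_alpha. *)
Definition rho4_weight (alpha : R) (k : nat) : R :=
  match k with 0 => 3%:R | 1 => alpha | 2 => 3%:R | _ => 10%:R - alpha end.

Lemma rho4_diag (alpha : R) (i : 'I_4) (k : nat) : (k < 4)%N ->
  rho4 alpha (idx i (addm4 i k)) (idx i (addm4 i k)) = rho4_weight alpha k / 64%:R.
Proof.
move=> lt_k4; rewrite rho4_entry Pplus4_entry !Pik_entry !eqxx (eq_sym i).
rewrite addm4_fixed // !addm4_shift_eq //=.
by case: k lt_k4 => [|[|[|[|?]]]] //= _; field.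
Qed.

Lemma rho4_offdiag (alpha : R) (i j : 'I_4) : i != j ->
  rho4 alpha (idx j j) (idx i i) = 3%:R / 64%:R.
Proof.
move=> /negbTE nij; rewrite rho4_entry Pplus4_entry !Pik_entry !eqxx nij /=.
by field.
Qed.

Lemma trace_rho4_W (alpha a b c d : R) :
  \tr (rho4 alpha *m Wmx a b c d) =
  (3%:R * a + alpha * b + 3%:R * c + (10%:R - alpha) * d - 9%:R) / 16%:R.
Proof.
have diag_term (i : 'I_4) :
    \tr (rho4 alpha *m (a *: outer (ket2 R i i) (ket2 R i i)
      + b *: outer (ket2 R i (addm4 i 1)) (ket2 R i (addm4 i 1))
      + c *: outer (ket2 R i (addm4 i 2)) (ket2 R i (addm4 i 2))
      + d *: outer (ket2 R i (addm4 i 3)) (ket2 R i (addm4 i 3))))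
    = (a * 3%:R + b * alpha + c * 3%:R + d * (10%:R - alpha)) / 64%:R.
  rewrite !mulmxDr -!scalemxAr !mxtraceD !mxtraceZ !trace_mul_outer !rho4_diag //.
  have := @rho4_diag alpha i 0 isT; rewrite addm4_0 => ->.
  by rewrite /= !mulrA -!mulrDl.
have offdiag_term (i : 'I_4) :
    \tr (rho4 alpha *m \sum_(j < 4 | i != j) outer (ket2 R i i) (ket2 R j j))
    = 9%:R / 64%:R.
  rewrite mxtrace_mul_sumr (eq_bigr (fun=> 3%:R / 64%:R)) => [|j nij].
    rewrite sumr_const (@eq_card _ _ (predC1 i)) => [|j]; last by rewrite !inE eq_sym.
    by rewrite cardC1 card_ord /= -mulr_natr; field.
  by rewrite outer_ket2 mxtrace_mul_delta rho4_offdiag.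
rewrite /Wmx mulmxBr raddfB /= [X in X - _]mxtrace_mul_sumr [X in _ - X]mxtrace_mul_sumr.
under eq_bigr do rewrite diag_term.
under [X in _ - X]eq_bigr do rewrite offdiag_term.
rewrite !sumr_const card_ord -[X in X - _]mulr_natr -[X in _ - X]mulr_natr.
by field.
Qed.

End Entries.

Theorem mainTheorem4 (R : rcfType) (alpha : R) :
  ((1 <= alpha < 3%:R) \/ (7%:R < alpha <= 9%:R)) ->
  exists a b c d : R,
    [/\ 0 <= a, 0 <= b, 0 <= c & 0 <= d] /\
    ((a + c = 2%:R /\ b + d = 1 /\ b * d = (1 - a) ^+ 2) \/
     (a + c = 1 /\ b + d = 2%:R /\ a * c = (1 - b) ^+ 2)) /\
    \tr (rho4 alpha *m Wmx a b c d) < 0.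
Proof.
case=> /andP [lo hi].
- (* alpha < 3: the Class I witness W[1,1,1,0], with 16 Tr = alpha - 3 *)
  exists 1, 1, 1, 0; split; first by rewrite ler01 lexx.
  split; first by left; rewrite subrr expr0n /=; split; [|split]; ring.
  by rewrite trace_rho4_W; lra.
- (* alpha > 7: the Class I witness W[1,0,1,1], with 16 Tr = 7 - alpha *)
  exists 1, 0, 1, 1; split; first by rewrite ler01 lexx.
  split; first by left; rewrite subrr expr0n /=; split; [|split]; ring.
  by rewrite trace_rho4_W; lra.
Qed.
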